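(* Let $S\subset\mathbb P^1$ be finite, let $(\alpha_1(p),\alpha_2(p),\alpha_3(p))_{p\in S}$ be real numbers with $\max_i\alpha_i(p)-\min_i\alpha_i(p)<1$ for each $p$ and $\sum_{i=1}^3\sum_{p\in S}\alpha_i(p)=0$, and let $(d_1,d_2,d_3)\in\mathbb Z^3$. For $i=1,2$ let $\ell_i=\#\{p\in S:\alpha_{i+1}(p)>\alpha_i(p)\}$. Then there exists a semistable strongly parabolic system of Hodge bundles $(\mathcal E,\theta)$ of type $(1,1,1)$ and parabolic degree $0$, with $\mathcal E=\mathcal L_1\oplus\mathcal L_2\oplus\mathcal L_3$, $\mathcal L_i$ of degree $d_i$ carrying weights $\alpha_i(p)$, and $\theta_1,\theta_2$ nonzero, if and only if $$\sum_{p\in S}(\alpha_2(p)+\alpha_3(p))\le d_1\le d_2-2+\ell_1\le d_3-4+\ell_1+\ell_2\le-\sum_{p\in S}\alpha_3(p)-4+\ell_1+\ell_2$$ and $d_1+d_2+d_3=0$.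
   Context: A strongly parabolic system of Hodge bundles of type $(1,1,1)$ over $\mathbb P^1$ with parabolic structure at $S$: line bundles $\mathcal L_1,\mathcal L_2,\mathcal L_3$ with weights $\alpha_i(p)$ at $p\in S$, $\mathcal E=\mathcal L_1\oplus\mathcal L_2\oplus\mathcal L_3$, and a Higgs field $\theta$ given by $\theta_1:\mathcal L_1\to\mathcal L_2\otimes\Omega^1(\log S)$, $\theta_2:\mathcal L_2\to\mathcal L_3\otimes\Omega^1(\log S)$, $\theta(\mathcal L_3)=0$, such that $\mathrm{res}_p\theta_i=0$ whenever $\alpha_{i+1}(p)\le\alpha_i(p)$ (the residue must send each weight part into the part of the next strictly larger weight). The parabolic degree of a sum $\mathcal F$ of some of the $\mathcal L_i$ is $\sum\big(d_i+\sum_{p}\alpha_i(p)\big)$ over the summands. $(\mathcal E,\theta)$ is semistable if every nonzero subbundle $\mathcal F=\bigoplus_{i\in A}\mathcal L_i$ ($A\subset\{1,2,3\}$) with $\theta(\mathcal F)\subset\mathcal F\otimes\Omega^1(\log S)$ satisfies $\mathrm{pardeg}\,\mathcal F/\mathrm{rank}\,\mathcal F\le\mathrm{pardeg}\,\mathcal E/3$. *)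

From HB Require Import structures.
From mathcomp Require Import all_boot all_order all_algebra.
From mathcomp Require Import reals.
From mathcomp Require Import complex.
Set Implicit Arguments. Unset Strict Implicit. Unset Printing Implicit Defensive.
Import Order.TTheory GRing.Theory Num.Theory.
Local Open Scope ring_scope.

Definition Cplx (R : realType) := complex R.

(* Points of P^1 over a field k: [Some z] is the point with affine
   coordinate z, [None] is the point at infinity. *)
Definition P1 (k : Type) := option k.

(* Global sections of O(n) on P^1 (n : int), in the standard affine chart:
   polynomials of degree <= n; only 0 when n < 0. *)
Definition is_section (k : fieldType) (n : int) (f : {poly k}) : bool :=
  if (n < 0)%R then f == 0 else (size f <= `|n|.+1)%N.

(* Value (in the fibre, up to the standard trivialisation) of a section of
   O(n) at a point of P^1; its vanishing is intrinsic. *)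
Definition sec_at (k : fieldType) (n : int) (f : {poly k}) (p : P1 k) : k :=
  match p with Some z => f.[z] | None => f`_(`|n|%N) end.

(* Indices 1,2,3 of the paper are the ordinals 0,1,2 of 'I_3. *)
Definition idx1 : 'I_3 := @Ordinal 3 0 isT.
Definition idx2 : 'I_3 := @Ordinal 3 1 isT.
Definition idx3 : 'I_3 := @Ordinal 3 2 isT.

Definition tri (T : Type) (x y z : T) (i : 'I_3) : T :=
  match val i with 0%N => x | 1%N => y | _ => z end.

Section Hodge.
Variables (R : realType).
Let C := Cplx R.
(* data: marked points S, degrees d i, weights al i p, Higgs components
   th1 : L1 -> L2 (x) Omega^1(log S), th2 : L2 -> L3 (x) Omega^1(log S),
   viewed as sections of L_i^* (x) L_(i+1) (x) Omega^1(log S)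
   = O(d_(i+1) - d_i - 2 + #S). *)
Variables (S : seq (P1 C)) (d : 'I_3 -> int) (al : 'I_3 -> P1 C -> R)
          (th1 th2 : {poly C}).

Definition higgs_deg (i j : 'I_3) : int := d j - d i - 2 + (size S)%:Z.

(* parabolic degree of the subbundle ⊕_{i in A} L_i *)
Definition pardeg (A : {set 'I_3}) : R :=
  \sum_(i in A) ((d i)%:~R + \sum_(p <- S) al i p).

(* theta(F) ⊂ F ⊗ Omega^1(log S) for F = ⊕_{i in A} L_i
   (theta(L3) = 0) *)
Definition theta_invariant (A : {set 'I_3}) : bool :=
  ((idx1 \in A) && (th1 != 0) ==> (idx2 \in A)) &&
  ((idx2 \in A) && (th2 != 0) ==> (idx3 \in A)).

Definition semistable : Prop :=
  forall A : {set 'I_3}, A != set0 -> theta_invariant A ->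
    pardeg A / (#|A|%:R) <= pardeg setT / 3%:R.

Definition strongly_parabolic_Hodge111 : Prop :=
  [/\ is_section (higgs_deg idx1 idx2) th1,
      is_section (higgs_deg idx2 idx3) th2,
      (forall p, p \in S -> al idx2 p <= al idx1 p ->
         sec_at (higgs_deg idx1 idx2) th1 p = 0) &
      (forall p, p \in S -> al idx3 p <= al idx2 p ->
         sec_at (higgs_deg idx2 idx3) th2 p = 0)].

End Hodge.

From HB Require Import structures.
From mathcomp Require Import all_boot all_order all_algebra.
From mathcomp Require Import reals complex zify lra.
(* A nonzero section of O(n) on P^1 vanishing at m distinct points exists
   iff m <= n.  Strong parabolicity forces theta_i to vanish at the #S - l_i
   points where the weights do not increase, and theta_i is a section of
   O(d_(i+1) - d_i - 2 + #S): this gives the two middle inequalities.  When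
   theta_1, theta_2 are nonzero the only theta-invariant subbundles are L3,
   L2 + L3 and E, so for parabolic degree 0 semistability amounts to
   pardeg L3 <= 0 and pardeg (L2 + L3) = - pardeg L1 <= 0: the outer
   inequalities. *)

Set Implicit Arguments.
Unset Strict Implicit.
Unset Printing Implicit Defensive.

Import Order.TTheory GRing.Theory Num.Theory.
Local Open Scope ring_scope.

Section VanishingSections.
Variable k : fieldType.

Lemma size_P1_uniq (F : seq (P1 k)) :
  uniq F -> size F = (size (pmap id F) + (None \in F))%N.
Proof.
move=> uF; rewrite size_pmap -count_uniq_mem // -(count_predC (fun p : P1 k => p) F).
by congr (_ + _)%N; apply: eq_count => -[].
Qed.

Lemma size_vanishing_le (n : int) (f : {poly k}) (F : seq (P1 k)) :
  uniq F -> f != 0 -> is_section n f ->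
  {in F, forall p, sec_at n f p = 0} -> (size F)%:Z <= n.
Proof.
move=> uF f_neq0; rewrite /is_section.
case: n => [m|m] /=; last by rewrite (negPf f_neq0).
move=> size_f f_vanish; rewrite size_P1_uniq // lez_nat.
have affine_roots : (size (pmap id F) < size f)%N.
  apply: max_poly_roots => //; last by apply: (pmap_uniq (g := Some)) => //; case.
  apply/allP => z; rewrite mem_pmap map_id => zF; exact/rootP/(f_vanish _ zF).
have [NF|_] := boolP (None \in F).
  2: by rewrite addn0 -ltnS (leq_trans affine_roots).
(* At infinity sec_at reads the coefficient of degree m, which must vanish. *)
suff : (size f <= m)%N by rewrite addn1; apply: leq_trans.
move: size_f; rewrite leq_eqVlt => /predU1P[size_f|] //.
move: f_neq0; rewrite -lead_coef_eq0 lead_coefE size_f.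
by have /= -> := f_vanish _ NF; rewrite eqxx.
Qed.

Lemma vanishing_section_exists (n : int) (F : seq (P1 k)) :
  uniq F -> (size F)%:Z <= n ->
  exists2 f : {poly k}, f != 0 & is_section n f /\ {in F, forall p, sec_at n f p = 0}.
Proof.
move=> uF; case: n => [m|//]; rewrite lez_nat size_P1_uniq // => size_F.
set g := \prod_(z <- pmap id F) ('X - z%:P).
have size_g : size g = (size (pmap id F)).+1 by rewrite size_prod_XsubC.
exists g; first exact/monic_neq0/monic_prod_XsubC.
split=> [|[z|] pF /=]; first by rewrite /is_section /= size_g; lia.
  by apply/rootP; rewrite root_prod_XsubC mem_pmap map_id.
by apply: nth_default; rewrite size_g; move: size_F; rewrite pF; lia.
Qed.

Lemma vanishing_sectionP (n : int) (F : seq (P1 k)) : uniq F ->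
  (exists2 f : {poly k}, f != 0 & is_section n f /\ {in F, forall p, sec_at n f p = 0})
  <-> (size F)%:Z <= n.
Proof.
move=> uF; split; last exact: vanishing_section_exists.
by case=> f f_neq0 [fn f_vanish]; apply: size_vanishing_le f_vanish.
Qed.

Lemma vanishing_section_filterP (n : int) (F : seq (P1 k)) (P : pred (P1 k)) :
  uniq F ->
  (exists2 f : {poly k}, f != 0 &
     is_section n f /\ forall p, p \in F -> P p -> sec_at n f p = 0)
  <-> (count P F)%:Z <= n.
Proof.
move=> uF; rewrite -size_filter -vanishing_sectionP ?filter_uniq //.
split=> -[f f_neq0 [fn f_vanish]]; exists f => //; split=> // p.
  by rewrite mem_filter => /andP[Pp pF]; exact: f_vanish.
by move=> pF Pp; apply: f_vanish; rewrite mem_filter Pp.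
Qed.

End VanishingSections.

Lemma count_leNlt (T : Type) (R : realDomainType) (f g : T -> R) (s : seq T) :
  count (fun x => g x <= f x) s = (size s - count (fun x => (f x < g x)%R) s)%N.
Proof.
rewrite -(count_predC (fun x => f x < g x)) addKn.
by apply: eq_count => x /=; rewrite leNgt.
Qed.

Lemma sum_ord3 (V : nmodType) (F : 'I_3 -> V) (A : {set 'I_3}) :
  \sum_(i in A) F i = (if idx1 \in A then F idx1 else 0)
    + (if idx2 \in A then F idx2 else 0) + (if idx3 \in A then F idx3 else 0).
Proof.
rewrite big_mkcond /= !big_ord_recl big_ord0 addr0 addrA.
by congr (_ + _ + _); congr (if _ \in A then F _ else 0); apply: val_inj.
Qed.

Section Hodge111.
Variables (R : realType) (S : seq (P1 (Cplx R))).
Variables (d : 'I_3 -> int) (al : 'I_3 -> P1 (Cplx R) -> R).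

Definition line_pardeg (i : 'I_3) : R := (d i)%:~R + \sum_(p <- S) al i p.

Lemma pardegE (A : {set 'I_3}) : pardeg S d al A =
  (if idx1 \in A then line_pardeg idx1 else 0)
  + (if idx2 \in A then line_pardeg idx2 else 0)
  + (if idx3 \in A then line_pardeg idx3 else 0).
Proof. exact: sum_ord3. Qed.

Lemma pardeg_setT :
  pardeg S d al setT = line_pardeg idx1 + line_pardeg idx2 + line_pardeg idx3.
Proof. by rewrite pardegE !in_setT. Qed.

Lemma semistableP (th1 th2 : {poly Cplx R}) :
  th1 != 0 -> th2 != 0 -> pardeg S d al setT = 0 ->
  semistable S d al th1 th2 <->
  line_pardeg idx3 <= 0 /\ line_pardeg idx2 + line_pardeg idx3 <= 0.
Proof.
move=> th1_neq0 th2_neq0 pardegT0; rewrite /semistable pardegT0 mul0r.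
have le0_div (A : {set 'I_3}) (x : R) :
    A != set0 -> (x / #|A|%:R <= 0) = (x <= 0).
  by move=> A_neq0; rewrite pmulr_lle0 // invr_gt0 ltr0n card_gt0.
split=> [semi | [le3 le23] A A_neq0 invA].
  have ne3 : [set idx3] != set0 by apply/set0Pn; exists idx3; rewrite inE.
  have ne23 : [set idx2; idx3] != set0.
    by apply/set0Pn; exists idx3; rewrite !inE.
  have inv3 : theta_invariant th1 th2 [set idx3] by rewrite /theta_invariant !inE.
  have inv23 : theta_invariant th1 th2 [set idx2; idx3].
    by rewrite /theta_invariant !inE /= implybT.
  have := semi _ ne3 inv3; have := semi _ ne23 inv23.
  by rewrite !le0_div // !pardegE !inE /= !add0r => le23 le3; split.
rewrite (le0_div _ _ A_neq0).
move: invA pardegT0.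
rewrite /theta_invariant pardeg_setT !pardegE th1_neq0 th2_neq0 !andbT.
by case: (idx1 \in A); case: (idx2 \in A); case: (idx3 \in A) => //= _; lra.
Qed.

Lemma strongly_parabolic_existsP : uniq S ->
  (exists th1 th2, [/\ strongly_parabolic_Hodge111 S d al th1 th2, th1 != 0 & th2 != 0])
  <-> (count (fun p => al idx2 p <= al idx1 p) S)%:Z <= higgs_deg S d idx1 idx2
      /\ (count (fun p => al idx3 p <= al idx2 p) S)%:Z <= higgs_deg S d idx2 idx3.
Proof.
move=> uS; rewrite -!vanishing_section_filterP //; split.
  by case=> th1 [th2 [[s1 s2 z1 z2] n1 n2]]; split; [exists th1 | exists th2].
by case=> -[th1 n1 [s1 z1]] [th2 n2 [s2 z2]]; exists th1, th2.
Qed.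

Lemma semistable_Hodge111_existsP : uniq S ->
  (exists th1 th2,
     [/\ strongly_parabolic_Hodge111 S d al th1 th2, th1 != 0, th2 != 0,
         pardeg S d al setT = 0 & semistable S d al th1 th2])
  <-> [/\ (count (fun p => al idx2 p <= al idx1 p) S)%:Z <= higgs_deg S d idx1 idx2,
          (count (fun p => al idx3 p <= al idx2 p) S)%:Z <= higgs_deg S d idx2 idx3,
          line_pardeg idx1 + line_pardeg idx2 + line_pardeg idx3 = 0,
          line_pardeg idx3 <= 0 &
          line_pardeg idx2 + line_pardeg idx3 <= 0].
Proof.
move=> uS; rewrite -pardeg_setT; split.
  case=> th1 [th2 [sp n1 n2 pT semi]].
  have [le3 le23] := (semistableP n1 n2 pT).1 semi.
  have /(strongly_parabolic_existsP uS)[c12 c23] :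
      exists th1 th2, [/\ strongly_parabolic_Hodge111 S d al th1 th2, th1 != 0 & th2 != 0].
    by exists th1, th2.
  by split.
case=> c12 c23 pT le3 le23.
have [th1 [th2 [sp n1 n2]]] := (strongly_parabolic_existsP uS).2 (conj c12 c23).
by exists th1, th2; split => //; apply/(semistableP n1 n2 pT).
Qed.

End Hodge111.

Theorem proposition9p1 (R : realType) (S : seq (P1 (Cplx R)))
  (a1 a2 a3 : P1 (Cplx R) -> R) (d1 d2 d3 : int) :
  uniq S ->
  (forall p, p \in S ->
     Num.max (Num.max (a1 p) (a2 p)) (a3 p)
       - Num.min (Num.min (a1 p) (a2 p)) (a3 p) < 1) ->
  \sum_(p <- S) (a1 p + a2 p + a3 p) = 0 ->
  let l1 := count (fun p => a1 p < a2 p) S in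
  let l2 := count (fun p => a2 p < a3 p) S in
  (exists th1 th2 : {poly Cplx R},
     [/\ strongly_parabolic_Hodge111 S (tri d1 d2 d3) (tri a1 a2 a3) th1 th2,
         th1 != 0, th2 != 0,
         pardeg S (tri d1 d2 d3) (tri a1 a2 a3) setT = 0 &
         semistable S (tri d1 d2 d3) (tri a1 a2 a3) th1 th2])
  <->
  ([/\ \sum_(p <- S) (a2 p + a3 p) <= d1%:~R,
       d1 <= d2 - 2 + l1%:Z,
       d2 - 2 + l1%:Z <= d3 - 4 + l1%:Z + l2%:Z &
       (d3 - 4 + l1%:Z + l2%:Z)%:~R
         <= - \sum_(p <- S) a3 p - 4 + l1%:R + l2%:R]
   /\ d1 + d2 + d3 = 0).
Proof.
move=> uS _ weights0 l1 l2.
rewrite semistable_Hodge111_existsP // /line_pardeg /higgs_deg /tri /=.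
rewrite !count_leNlt -/l1 -/l2.
have l1_le : (l1 <= size S)%N := count_size _ _.
have l2_le : (l2 <= size S)%N := count_size _ _.
have sum_weights0 : \sum_(p <- S) a1 p + \sum_(p <- S) a2 p + \sum_(p <- S) a3 p = 0.
  by rewrite -!big_split.
have degrees0 : d1 + d2 + d3 = 0 <-> d1%:~R + d2%:~R + d3%:~R = 0 :> R.
  by rewrite -!intrD; split=> [-> // | /eqP]; rewrite intr_eq0 => /eqP.
rewrite big_split /= !intrD !pmulrn degrees0.
clearbody l1 l2; split=> [[c12 c23 deg0 le3 le23] | [[le1 c12 c23 le3] deg0]].
  split; [split=> //; [lra | lia | lia | lra] | lra].
split; [lia | lia | lra | lra | lra].
Qed.
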